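(* Consider the clique inference problem with nonnegative vertex potentials and the Potts clique potential $C(\mathbf{v})=\lambda\sum_{v\in V}n_v(\mathbf{v})^2$ with $\lambda>0$. Let $\hat{\mathbf{v}}$ be the assignment returned by the generalized $\alpha$-pass algorithm with parameter $q=2$, and let $\mathbf{v}^*$ maximize $F$. Then $F(\hat{\mathbf{v}})\ge\frac{8}{9}F(\mathbf{v}^* )$.
   Context: Clique inference problem: there are $n$ vertices $1,\dots,n$, a finite set $V$ of values, real vertex potentials $\psi_{jv}$ ($1\le j\le n$, $v\in V$), and a clique potential $C$ depending only on the counts $n_v(\mathbf{v})=|\{j:v_j=v\}|$; the objective is $F(\mathbf{v})=\sum_j\psi_{jv_j}+C(\mathbf{v})$ over $\mathbf{v}\in V^n$. Generalized $\alpha$-pass with parameter $q$: for each nonempty subset $A\subseteq V$ with $|A|\le q$ and each count $k\in\{1,\dots,n\}$, sort the vertices in decreasing order of $\max_{\alpha\in A}\psi_{i\alpha}-\max_{v\notin A}\psi_{iv}$, assign the top $k$ vertices their best value in $A$ (a value in $A$ maximizing $\psi_{iv}$) and the remaining vertices their best value not in $A$; output the best (largest $F$) of all these assignments over all $A$ and $k$. *)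

From HB Require Import structures.
From mathcomp Require Import all_boot all_order all_algebra all_fingroup.
Set Implicit Arguments. Unset Strict Implicit. Unset Printing Implicit Defensive.
Import Order.TTheory GRing.Theory Num.Theory.
Local Open Scope ring_scope.

Section Clique.
Variables (R : realFieldType) (n : nat) (V : finType).
Variable psi : 'I_n -> V -> R.

Definition count_val (x : 'I_n -> V) (v : V) : nat := #|[set j | x j == v]|.

Definition potts (lambda : R) (x : 'I_n -> V) : R :=
  lambda * \sum_(v : V) (count_val x v)%:R ^+ 2.

Definition objF (C : ('I_n -> V) -> R) (x : 'I_n -> V) : R :=
  \sum_(j < n) psi j (x j) + C x.

Definition bestIn (B : {set V}) (i : 'I_n) (a : V) : Prop :=
  a \in B /\ forall b, b \in B -> psi i b <= psi i a.

(* key(j) <= key(i), where key(i) = max_{a in A} psi_{ia} - max_{b notin A} psi_{ib}.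
   (If no value lies outside A, every key is +infinity and the condition is vacuous.) *)
Definition key_le (A : {set V}) (j i : 'I_n) : Prop :=
  forall a b a' b', bestIn A i a -> bestIn (~: A) i b ->
    bestIn A j a' -> bestIn (~: A) j b' ->
    psi j a' - psi j b' <= psi i a - psi i b.

Definition valid_pass (q : nat) (A : {set V}) (k : nat) : bool :=
  [&& A != set0, #|A| <= q, 0 < k & k <= n]%N.

(* x is an assignment produced by the pass (A,k) for some sorting of the
   vertices in decreasing order of key (s p = vertex at position p) and some
   choice of best values (ties broken arbitrarily) *)
Definition pass_result (A : {set V}) (k : nat) (x : 'I_n -> V) : Prop :=
  exists s : {perm 'I_n},
    (forall p p' : 'I_n, (p <= p')%N -> key_le A (s p') (s p)) /\
    (forall p : 'I_n,
       if (p < k)%N then bestIn A (s p) (x (s p))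
       else bestIn (~: A) (s p) (x (s p))).

(* vhat is an output of the generalized alpha-pass with parameter q, for some
   tie-breaking: sel A k is the assignment produced by pass (A,k) (None only if
   that pass cannot produce any assignment), and vhat is a best one of them. *)
Definition alpha_pass_output (q : nat) (C : ('I_n -> V) -> R)
    (vhat : 'I_n -> V) : Prop :=
  exists sel : {set V} -> nat -> option ('I_n -> V),
    (forall A k x, sel A k = Some x -> valid_pass q A k /\ pass_result A k x) /\
    (forall A k, valid_pass q A k -> (exists x, pass_result A k x) ->
        sel A k <> None) /\
    (exists A k, sel A k = Some vhat) /\
    (forall A k x, sel A k = Some x -> objF C x <= objF C vhat).

End Clique.

(* Let [a] and [b] be the most and the second most frequent values of an
   assignment [y], with counts [X >= Y]; let [Z] be the number of remaining
   vertices and [P] the vertex potential of [y].  Every other count is at most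
   [Y], so [F y <= P + lambda (X^2 + Y^2 + Y Z)].
   For a set of values [A], an exchange argument shows that the pass [(A, k)],
   where [k] is the number of vertices that [y] sends into [A], collects vertex
   potential at least [P] while sending at least [k] vertices into [A]; by
   Cauchy-Schwarz its clique potential is then at least [lambda k^2 / |A|].
   The passes [({a}, X)], [({a, b}, X + Y)] and [({a}, n)] thus give
     F >= P + lambda X^2,  F >= P + lambda (X + Y)^2 / 2,  F >= lambda (X + Y + Z)^2,
   and [9 F >= 8 (P + lambda (X^2 + Y^2 + Y Z))] follows by adding 8 times
   the second bound to the third when [X <= 2 Y], and 8 times the first bound
   to the third otherwise. *)

From HB Require Import structures.
From mathcomp Require Import all_boot all_order all_algebra all_fingroup.
From mathcomp Require Import ring lra.
Import Order.TTheory GRing.Theory Num.Theory.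
Local Open Scope ring_scope.
Set Implicit Arguments. Unset Strict Implicit. Unset Printing Implicit Defensive.

Lemma sqr_sum_le_card_sum_sqr (R : realDomainType) (I : finType) (A : {pred I})
    (c : I -> R) :
  (\sum_(i in A) c i) ^+ 2 <= #|A|%:R * \sum_(i in A) c i ^+ 2.
Proof.
have double_sum : \sum_(i in A) \sum_(j in A) (c i ^+ 2 + c j ^+ 2) =
                  (#|A|%:R * \sum_(i in A) c i ^+ 2) *+ 2.
  under eq_bigr do rewrite big_split /= sumr_const.
  by rewrite big_split /= sumr_const sumrMnl mulr_natl mulr2n.
rewrite -(ler_pMn2r (_ : 0 < 2)%N) // -double_sum expr2 mulr_suml -sumrMnl.
apply: ler_sum => i _; rewrite mulr_sumr -sumrMnl; apply: ler_sum => j _.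
exact: leif_mean_square_scaled.
Qed.

Lemma sum_sqr_le_top_two (R : realDomainType) (I : finType) (c : I -> R) a b :
  a != b -> (forall i, i != a -> i != b -> 0 <= c i <= c b) ->
  \sum_i c i ^+ 2 <= c a ^+ 2 + c b ^+ 2 + c b * \sum_(i | (i != a) && (i != b)) c i.
Proof.
move=> neq_ab c_le.
rewrite (bigD1 a) //= (bigD1 b) 1?eq_sym //= addrA lerD2l mulr_sumr.
apply: ler_sum => i /andP [ia ib]; have /andP [ci_ge0 le_cib] := c_le i ia ib.
by rewrite expr2 ler_wpM2r.
Qed.

Lemma eight_ninths_bound (R : realDomainType) (P X Y Z lam F : R) :
  0 <= Y <= X -> 0 <= Z -> 0 <= lam ->
  P + lam * X ^+ 2 <= F -> 2 * P + lam * (X + Y) ^+ 2 <= 2 * F ->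
  lam * (X + Y + Z) ^+ 2 <= F ->
  8 * (P + lam * (X ^+ 2 + Y ^+ 2 + Y * Z)) <= 9 * F.
Proof.
move=> /andP [Y_ge0 le_YX] Z_ge0 lam_ge0 F_single F_pair F_all.
have [le_X2Y | lt_2YX] := lerP X (2 * Y).
  have : 8 * (X ^+ 2 + Y ^+ 2 + Y * Z) <= 4 * (X + Y) ^+ 2 + (X + Y + Z) ^+ 2.
    have := sqr_ge0 (2 * Y - Z).
    have : 0 <= (X - Y) * (7 * Y - 3 * X + 2 * Z) by apply: mulr_ge0; lra.
    nra.
  nra.
have : 8 * (X ^+ 2 + Y ^+ 2 + Y * Z) <= 8 * X ^+ 2 + (X + Y + Z) ^+ 2.
  have := sqr_ge0 (Y - Z).
  have : 0 <= (X - 2 * Y) * (X + 4 * Y + 2 * Z) by apply: mulr_ge0; lra.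
  nra.
nra.
Qed.

Lemma card_ord_lt n k : (k <= n)%N -> #|[set p : 'I_n | (p < k)%N]| = k.
Proof.
move=> le_kn; have widen_inj : injective (widen_ord le_kn).
  by move=> i j /(congr1 val) /= /val_inj.
rewrite -[RHS]card_ord -(card_imset _ widen_inj).
apply: eq_card => p; rewrite inE.
apply/idP/imsetP => [lt_pk | [q _ ->]]; last exact: (ltn_ord q).
by exists (Ordinal lt_pk) => //; apply: val_inj.
Qed.

Lemma exists_sorted_perm (R : realDomainType) n (key : 'I_n -> R) :
  exists s : {perm 'I_n}, forall p p' : 'I_n, (p <= p')%N -> key (s p') <= key (s p).
Proof.
pose geq_key i j := key j <= key i.
have geq_key_trans : transitive geq_key.
  by move=> j i l /= h1 h2; apply: le_trans h2 h1.
have geq_key_refl : reflexive geq_key by move=> i; apply: lexx.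
pose l := sort geq_key (enum 'I_n).
have size_l : size l = n by rewrite size_sort size_enum_ord.
have sorted_l : sorted geq_key l by apply/sort_sorted => i j; apply: le_total.
pose f (p : 'I_n) := nth p l p.
have fE p q : f q = nth p l q by rewrite /f (set_nth_default p) // size_l.
have f_inj : injective f.
  move=> p q; rewrite (fE p q) => /eqP; rewrite nth_uniq ?size_l //.
    by move/eqP/val_inj.
  by rewrite sort_uniq enum_uniq.
exists (perm f_inj) => p p' le_pp'; rewrite !permE (fE p p').
by apply: (sorted_leq_nth geq_key_trans geq_key_refl p sorted_l); rewrite ?inE ?size_l.
Qed.

Section CliqueInference.
Variables (R : realFieldType) (n : nat) (V : finType) (psi : 'I_n -> V -> R).

Lemma card_preim_sum_count (x : 'I_n -> V) (A : {set V}) :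
  #|[set j | x j \in A]| = (\sum_(v in A) count_val x v)%N.
Proof.
rewrite /count_val -sum1_card (partition_big x (mem A)) /=; last by move=> j; rewrite inE.
apply: eq_bigr => v Av; rewrite -sum1_card; apply: eq_bigl => j.
by rewrite !inE; case: eqP => [-> | _]; rewrite ?Av ?andbF.
Qed.

Lemma sum_count_val (x : 'I_n -> V) : (\sum_v count_val x v)%N = n.
Proof.
have -> : (\sum_v count_val x v = \sum_(v in [set: V]) count_val x v)%N.
  by apply: eq_bigl => v; rewrite inE.
by rewrite -card_preim_sum_count -[RHS]card_ord; apply: eq_card => j; rewrite !inE.
Qed.

Lemma card_preim_set1 (x : 'I_n -> V) a : #|[set j | x j \in [set a]]| = count_val x a.
Proof. by rewrite card_preim_sum_count big_set1. Qed.

Lemma card_preim_set2 (x : 'I_n -> V) a b : a != b ->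
  #|[set j | x j \in [set a; b]]| = (count_val x a + count_val x b)%N.
Proof. by move=> neq_ab; rewrite card_preim_sum_count big_setU1 ?inE // big_set1. Qed.

Lemma count_val_const (a : V) : count_val (fun _ : 'I_n => a) a = n.
Proof. by rewrite /count_val -[RHS]card_ord; apply: eq_card => j; rewrite inE eqxx. Qed.

Lemma bestIn_exists i (B : {set V}) : B != set0 -> exists a, bestIn psi B i a.
Proof.
case/set0Pn => a0 Ba0; have [a Ba a_max] := arg_maxP (psi i) Ba0.
by exists a; split.
Qed.

Lemma bestIn_eq B i a a' : bestIn psi B i a -> bestIn psi B i a' -> psi i a = psi i a'.
Proof. by case=> Ba maxa [Ba' maxa']; apply/eqP; rewrite eq_le maxa' // maxa. Qed.

Lemma pass_key_exists (A : {set V}) : exists key : 'I_n -> R,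
  forall i a b, bestIn psi A i a -> bestIn psi (~: A) i b -> psi i a - psi i b = key i.
Proof.
apply: (@fin_all_exists _ (fun=> R) (fun i r => forall a b, bestIn psi A i a ->
  bestIn psi (~: A) i b -> psi i a - psi i b = r)) => i.
case: (eqVneq A set0) => [-> | /(bestIn_exists i) [a ha]].
  by exists 0 => a' b' []; rewrite inE.
case: (eqVneq (~: A) set0) => [-> | /(bestIn_exists i) [b hb]].
  by exists 0 => a' b' _ []; rewrite inE.
exists (psi i a - psi i b) => a' b' ha' hb'.
by rewrite (bestIn_eq ha' ha) (bestIn_eq hb' hb).
Qed.

Lemma pass_result_exists (A : {set V}) k :
  A != set0 -> ((k < n)%N -> ~: A != set0) ->
  exists x, pass_result psi A k x.
Proof.
move=> A_n0 Ac_n0; have [key keyE] := pass_key_exists A.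
have [s s_sorted] := exists_sorted_perm key.
have [x x_best] : exists x : 'I_n -> V, forall j,
    bestIn psi (if ((s^-1)%g j < k)%N then A else ~: A) j (x j).
  apply: (@fin_all_exists _ (fun=> V)
    (fun j => bestIn psi (if ((s^-1)%g j < k)%N then A else ~: A) j)) => j.
  apply: bestIn_exists.
  case: ifP => // /negbT; rewrite -leqNgt => le_k; apply: Ac_n0.
  exact: leq_ltn_trans le_k (ltn_ord _).
exists x, s; split.
  move=> p p' le_pp' a b a' b' ha hb ha' hb'.
  by rewrite (keyE _ _ _ ha hb) (keyE _ _ _ ha' hb'); apply: s_sorted.
by move=> p; have := x_best (s p); rewrite permK; case: ifP.
Qed.

Lemma natr_card_set (P : pred 'I_n) : #|[set j | P j]|%:R = \sum_j (P j)%:R :> R.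
Proof.
rewrite -sum1_card natr_sum big_mkcond.
by apply: eq_bigr => j _; rewrite inE; case: (P j).
Qed.

Section Pass.
Variables (A : {set V}) (k : nat) (x : 'I_n -> V) (s : {perm 'I_n}).
Hypothesis s_sorted : forall p p' : 'I_n, (p <= p')%N -> key_le psi A (s p') (s p).
Hypothesis x_best : forall p : 'I_n,
  if (p < k)%N then bestIn psi A (s p) (x (s p)) else bestIn psi (~: A) (s p) (x (s p)).
Hypothesis le_kn : (k <= n)%N.

Lemma pass_best_vertex j :
  if ((s^-1)%g j < k)%N then bestIn psi A j (x j) else bestIn psi (~: A) j (x j).
Proof. by have := x_best ((s^-1)%g j); rewrite permKV. Qed.

Lemma card_pass_top : #|[set j | ((s^-1)%g j < k)%N]| = k.
Proof.
rewrite -[RHS](card_ord_lt le_kn) -[RHS](card_preimset _ (@perm_inj _ (s^-1)%g)).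
by apply: eq_card => j; rewrite !inE.
Qed.

Lemma pass_count_ge : (k <= #|[set j | x j \in A]|)%N.
Proof.
rewrite -{1}card_pass_top; apply/subset_leq_card/subsetP => j.
by rewrite !inE => first_j; have := pass_best_vertex j; rewrite first_j => -[].
Qed.

Lemma pass_key_sorted (key : 'I_n -> R) :
    (forall i a b, bestIn psi A i a -> bestIn psi (~: A) i b ->
       psi i a - psi i b = key i) ->
  forall p p' : 'I_n, (p <= p')%N -> A != set0 -> ~: A != set0 ->
    key (s p') <= key (s p).
Proof.
move=> keyE p p' le_pp' A_n0 Ac_n0.
have [[a ha] [b hb]] := (bestIn_exists (s p) A_n0, bestIn_exists (s p) Ac_n0).
have [[a' ha'] [b' hb']] := (bestIn_exists (s p') A_n0, bestIn_exists (s p') Ac_n0).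
by rewrite -(keyE _ _ _ ha hb) -(keyE _ _ _ ha' hb'); apply: s_sorted.
Qed.

Lemma pass_psi_ge (y : 'I_n -> V) : #|[set j | y j \in A]| = k -> (0 < k)%N ->
  \sum_j psi j (y j) <= \sum_j psi j (x j).
Proof.
move=> card_y k_gt0; have [key keyE] := pass_key_exists A.
have key_sorted := pass_key_sorted keyE.
have lt_k1n : (k.-1 < n)%N by rewrite prednK.
pose t := key (s (Ordinal lt_k1n)).
(* Every vertex gains at least ([j] among the first [k] positions - [y j \in A])
   times the threshold key [t]; both indicators sum to [k]. *)
have gain j : psi j (y j) + ((((s^-1)%g j < k)%N : nat)%:R - (y j \in A : nat)%:R) * t
    <= psi j (x j).
  have key_j : key j = key (s ((s^-1)%g j)) by rewrite permKV.
  have := pass_best_vertex j; case: ifP => first_j [xA x_max];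
    case: (boolP (y j \in A)) => yA; rewrite /= ?mulr1n ?mulr0n.
  - by rewrite subrr mul0r addr0; apply: x_max.
  - have Ac_n0 : ~: A != set0 by apply/set0Pn; exists (y j); rewrite inE.
    have [b [bAc b_max]] := bestIn_exists j Ac_n0.
    have := keyE _ _ _ (conj xA x_max) (conj bAc b_max).
    have : t <= key j.
      rewrite key_j; apply: key_sorted => //=; last by apply/set0Pn; exists (x j).
      by rewrite -ltnS prednK // first_j.
    have : psi j (y j) <= psi j b by apply: b_max; rewrite inE.
    lra.
  - have A_n0 : A != set0 by apply/set0Pn; exists (y j).
    have [a [aA a_max]] := bestIn_exists j A_n0.
    have := keyE _ _ _ (conj aA a_max) (conj xA x_max).
    have : key j <= t.
      rewrite key_j; apply: key_sorted => //=; last by apply/set0Pn; exists (x j).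
      by apply: leq_trans (leq_pred k) _; rewrite leqNgt first_j.
    have : psi j (y j) <= psi j a by apply: a_max.
    lra.
  - by rewrite subrr mul0r addr0; apply: x_max; rewrite inE.
apply: le_trans (ler_sum _ (fun j _ => gain j)).
rewrite big_split /= -mulr_suml sumrB -!natr_card_set card_pass_top card_y.
by rewrite subrr mul0r addr0.
Qed.

End Pass.

Lemma potts_ge_card_sqr (lambda : R) (x : 'I_n -> V) (A : {set V}) : 0 <= lambda ->
  lambda * #|[set j | x j \in A]|%:R ^+ 2 <= #|A|%:R * potts lambda x.
Proof.
move=> lam_ge0; rewrite /potts [leRHS]mulrCA ler_wpM2l // card_preim_sum_count natr_sum.
apply: le_trans (sqr_sum_le_card_sum_sqr _ _) _; rewrite ler_wpM2l //.
by rewrite [leRHS](bigID (mem A)) /= lerDl; apply: sumr_ge0 => v _; apply: sqr_ge0.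
Qed.

Lemma potts_le_top_two (lambda : R) (y : 'I_n -> V) a b : 0 <= lambda -> a != b ->
  (forall v, v != a -> v != b -> count_val y v <= count_val y b)%N ->
  potts lambda y <= lambda * ((count_val y a)%:R ^+ 2 + (count_val y b)%:R ^+ 2
    + (count_val y b)%:R * \sum_(v | (v != a) && (v != b)) (count_val y v)%:R).
Proof.
move=> lam_ge0 neq_ab b_max; rewrite /potts ler_wpM2l //.
apply: sum_sqr_le_top_two => // v va vb.
by rewrite ler0n ler_nat b_max.
Qed.

Lemma alpha_pass_output_n_gt0 q (C : ('I_n -> V) -> R) vhat :
  alpha_pass_output psi q C vhat -> (0 < n)%N.
Proof.
by case=> sel [sel_pass [_ [[A [k /sel_pass [/and4P [_ _ k_gt0 le_kn] _]]] _]]];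
  apply: leq_trans le_kn.
Qed.

Lemma alpha_pass_lower_bound q lambda vhat (y : 'I_n -> V) (A : {set V}) :
  0 <= lambda -> alpha_pass_output psi q (potts lambda) vhat ->
  (#|A| <= q)%N -> (0 < #|[set j | y j \in A]|)%N ->
  #|A|%:R * \sum_j psi j (y j) + lambda * #|[set j | y j \in A]|%:R ^+ 2
    <= #|A|%:R * objF psi (potts lambda) vhat.
Proof.
move=> lam_ge0 [sel [sel_pass [sel_total [_ sel_best]]]] A_le_q k_gt0.
set k := #|_| in k_gt0 *.
have A_n0 : A != set0.
  move: k_gt0; rewrite card_gt0 => /set0Pn [j]; rewrite inE => yA.
  by apply/set0Pn; exists (y j).
have le_kn : (k <= n)%N by rewrite -[n]card_ord max_card.
have Ac_n0 : (k < n)%N -> ~: A != set0.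
  apply: contraTN => /eqP Ac0; rewrite -leqNgt -{1}[n]card_ord.
  apply/subset_leq_card/subsetP => j _; have : y j \notin ~: A by rewrite Ac0 inE.
  by rewrite !inE negbK.
have [x pass_x] := pass_result_exists A_n0 Ac_n0.
have valid : valid_pass n q A k by apply/and4P.
case E : (sel A k) (sel_total A k valid (ex_intro _ x pass_x)) => [x'|] // _.
have [_ [s [s_sorted x'_best]]] := sel_pass _ _ _ E.
apply: le_trans (_ : #|A|%:R * objF psi (potts lambda) x' <= _); last first.
  by rewrite ler_wpM2l // (sel_best _ _ _ E).
rewrite /objF mulrDr; apply: lerD.
  by rewrite ler_wpM2l // (pass_psi_ge s_sorted x'_best le_kn (erefl k) k_gt0).
apply: le_trans (potts_ge_card_sqr _ _ lam_ge0); rewrite ler_wpM2l //.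
by rewrite ler_sqr ?nnegrE ?ler0n // ler_nat (pass_count_ge x'_best le_kn).
Qed.

Section TopPasses.
Variables (lambda : R) (vhat : 'I_n -> V).
Hypotheses (lam_ge0 : 0 <= lambda) (out : alpha_pass_output psi 2 (potts lambda) vhat).

Lemma alpha_pass_ge_single (y : 'I_n -> V) a : (0 < count_val y a)%N ->
  \sum_j psi j (y j) + lambda * (count_val y a)%:R ^+ 2
    <= objF psi (potts lambda) vhat.
Proof.
rewrite -card_preim_set1 => ya_gt0.
by have := alpha_pass_lower_bound lam_ge0 out _ ya_gt0; rewrite cards1 !mul1r; apply.
Qed.

Lemma alpha_pass_ge_pair (y : 'I_n -> V) a b : a != b -> (0 < count_val y a)%N ->
  2 * \sum_j psi j (y j) + lambda * ((count_val y a)%:R + (count_val y b)%:R) ^+ 2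
    <= 2 * objF psi (potts lambda) vhat.
Proof.
move=> neq_ab ya_gt0; have yab_gt0 := ltn_addr (count_val y b) ya_gt0.
rewrite -(card_preim_set2 y neq_ab) in yab_gt0.
have := alpha_pass_lower_bound lam_ge0 out _ yab_gt0.
by rewrite cards2 neq_ab card_preim_set2 // natrD; apply.
Qed.

Lemma alpha_pass_ge_all : (forall j v, 0 <= psi j v) ->
  lambda * n%:R ^+ 2 <= objF psi (potts lambda) vhat.
Proof.
move=> psi_ge0; pose a := vhat (Ordinal (alpha_pass_output_n_gt0 out)).
have := @alpha_pass_ge_single (fun _ => a) a; rewrite count_val_const.
move=> /(_ (alpha_pass_output_n_gt0 out)); apply: le_trans.
by rewrite lerDr; apply: sumr_ge0.
Qed.

End TopPasses.
End CliqueInference.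

Lemma alpha_pass_eight_ninths (R : realFieldType) (n : nat) (V : finType)
    (psi : 'I_n -> V -> R) lambda vhat (y : 'I_n -> V) :
  (forall j v, 0 <= psi j v) -> 0 < lambda ->
  alpha_pass_output psi 2 (potts lambda) vhat ->
  8 / 9 * objF psi (potts lambda) y <= objF psi (potts lambda) vhat.
Proof.
move=> psi_ge0 lam_gt0 out; have lam_ge0 := ltW lam_gt0.
pose m := count_val y; pose j0 := Ordinal (alpha_pass_output_n_gt0 out).
have [a _ a_max] := @arg_maxnP V (y j0) predT m isT.
have ma_gt0 : (0 < m a)%N.
  apply: leq_trans (a_max _ isT).
  by rewrite card_gt0; apply/set0Pn; exists j0; rewrite inE.
have F_single := alpha_pass_ge_single lam_ge0 out ma_gt0.
have F_all := alpha_pass_ge_all lam_ge0 out psi_ge0.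
set F := objF psi (potts lambda) in F_single F_all *.
set P := \sum_j psi j (y j) in F_single *.
have P_ge0 : 0 <= P by apply: sumr_ge0.
case: (pickP (fun b => b != a)) => [b0 b0a | only_a]; last first.
  have F_y : F y = P + lambda * (m a)%:R ^+ 2.
    rewrite /F /objF /potts; congr (_ + _ * _).
    by rewrite (bigD1 a) //= big1 ?addr0 // => v; rewrite only_a.
  have : 0 <= lambda * (m a)%:R ^+ 2 by rewrite mulr_ge0 ?sqr_ge0.
  by rewrite F_y; lra.
have [b ba b_max] := @arg_maxnP V b0 (fun v => v != a) m b0a.
have neq_ab : a != b by rewrite eq_sym.
have F_pair := alpha_pass_ge_pair lam_ge0 out neq_ab ma_gt0.
pose Z : R := \sum_(v | (v != a) && (v != b)) (m v)%:R.
have Z_ge0 : 0 <= Z by apply: sumr_ge0 => v _; apply: ler0n.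
have sum_m : n%:R = (m a)%:R + (m b)%:R + Z.
  by rewrite -(sum_count_val y) natr_sum (bigD1 a) //= (bigD1 b) 1?eq_sym //= addrA.
have F_y : F y <= P + lambda * ((m a)%:R ^+ 2 + (m b)%:R ^+ 2 + (m b)%:R * Z).
  by rewrite lerD2l potts_le_top_two // => v va _; apply: b_max.
have le_ba : (m b)%:R <= (m a)%:R :> R by rewrite ler_nat; apply: a_max.
have := eight_ninths_bound (Z := Z) _ Z_ge0 lam_ge0 F_single F_pair.
rewrite -sum_m ler0n le_ba => /(_ isT F_all); lra.
Qed.

Theorem theorem7 (R : realFieldType) (n : nat) (V : finType)
    (psi : 'I_n -> V -> R) (lambda : R)
    (vhat vstar : 'I_n -> V) :
  (forall j v, 0 <= psi j v) ->
  0 < lambda ->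
  alpha_pass_output psi 2 (potts lambda) vhat ->
  (forall x, objF psi (potts lambda) x <= objF psi (potts lambda) vstar) ->
  objF psi (potts lambda) vhat >= (8 / 9) * objF psi (potts lambda) vstar.
Proof.
move=> psi_ge0 lam_gt0 out _; exact: alpha_pass_eight_ninths.
Qed.
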